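(* Let $A=I_0+\dots+I_n$ be a sum of C$^*$-ideals and let $J\subseteq\{0,\dots,n\}$. Consider in addition the zero ideal $I_{n+1}=0$, so that $A=I_0+\dots+I_n+I_{n+1}$ is an $(n+2)$-fold decomposition. Then there is an isomorphism of C$^*$-algebras $$S\big(B(I_0,\dots,I_n)_J\big)\cong B(I_0,\dots,I_n,0)_{J\cup\{n+1\}},$$ natural with respect to families of $*$-homomorphisms $I_j\to I'_j$ ($j\le n$) induced by a $*$-homomorphism $A\to A'=I'_0+\dots+I'_n$ mapping each $I_j$ into $I'_j$.
   Context: For C$^*$-ideals $I_0,\dots,I_m$ summing to $A$: $\Delta^m=\{x\in[0,1]^{m+1}:\sum_ix_i=1\}$, $\partial\Delta^m$ = points with a zero coordinate, $\Delta^m_j=\{x\in\Delta^m:x_j\le x_i\ \forall i\}$; $B(I_0,\dots,I_m)=\{f:\Delta^m\to A\text{ continuous}: f|_{\partial\Delta^m}=0,\ f(\Delta^m_j)\subseteq I_j\ \forall j\le m\}$; for $J\subseteq\{0,\dots,m\}$, $B(I_0,\dots,I_m)_J=\{f\in B(I_0,\dots,I_m):f(\Delta^m_{j'})=0\ \forall j'\notin J\}$. $SA=\{f:[0,1]\to A\text{ continuous}:f(0)=f(1)=0\}$. *)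

From Stdlib Require Import Reals Lra.
Open Scope R_scope.

Definition C := (R * R)%type.
Definition Cone : C := (1, 0).
Definition Cadd (c d : C) : C := (fst c + fst d, snd c + snd d).
Definition Cmul (c d : C) : C :=
  (fst c * fst d - snd c * snd d, fst c * snd d + snd c * fst d).
Definition Cconj (c : C) : C := (fst c, - snd c).
Definition Cabs (c : C) : R := sqrt (fst c * fst c + snd c * snd c).

Record CStarAlg := {
  car :> Type;
  zero : car;
  add : car -> car -> car;
  opp : car -> car;
  smul : C -> car -> car;
  mul : car -> car -> car;
  star : car -> car;
  norm : car -> R;
  addA : forall a b c, add a (add b c) = add (add a b) c;
  addC : forall a b, add a b = add b a;
  add0 : forall a, add zero a = a;
  addN : forall a, add (opp a) a = zero;
  smulA : forall c d a, smul (Cmul c d) a = smul c (smul d a);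
  smul1 : forall a, smul Cone a = a;
  smulDl : forall c d a, smul (Cadd c d) a = add (smul c a) (smul d a);
  smulDr : forall c a b, smul c (add a b) = add (smul c a) (smul c b);
  mulA : forall a b c, mul a (mul b c) = mul (mul a b) c;
  mulDl : forall a b c, mul (add a b) c = add (mul a c) (mul b c);
  mulDr : forall a b c, mul a (add b c) = add (mul a b) (mul a c);
  smul_mull : forall c a b, smul c (mul a b) = mul (smul c a) b;
  smul_mulr : forall c a b, smul c (mul a b) = mul a (smul c b);
  starD : forall a b, star (add a b) = add (star a) (star b);
  starZ : forall c a, star (smul c a) = smul (Cconj c) (star a);
  starM : forall a b, star (mul a b) = mul (star b) (star a);
  starK : forall a, star (star a) = a;
  norm_ge0 : forall a, 0 <= norm a;
  norm_eq0 : forall a, norm a = 0 -> a = zero;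
  normZ : forall c a, norm (smul c a) = Cabs c * norm a;
  normD : forall a b, norm (add a b) <= norm a + norm b;
  normM : forall a b, norm (mul a b) <= norm a * norm b;
  norm_Cstar : forall a, norm (mul (star a) a) = norm a * norm a;
  complete : forall u : nat -> car,
    (forall eps, eps > 0 -> exists N, forall p q, (p >= N)%nat -> (q >= N)%nat ->
        norm (add (u p) (opp (u q))) < eps) ->
    exists l, forall eps, eps > 0 -> exists N, forall p, (p >= N)%nat ->
        norm (add (u p) (opp l)) < eps
}.

Arguments zero {c0}.
Arguments add {c0}.
Arguments opp {c0}.
Arguments smul {c0}.
Arguments mul {c0}.
Arguments star {c0}.
Arguments norm {c0}.

Definition dist {A : CStarAlg} (a b : A) : R := norm (add a (opp b)).

Fixpoint sumA {A : CStarAlg} (u : nat -> A) (n : nat) : A :=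
  match n with
  | O => u O
  | S k => add (sumA u k) (u (S k))
  end.

Definition is_star_hom {A A' : CStarAlg} (phi : A -> A') : Prop :=
  (forall a b, phi (add a b) = add (phi a) (phi b)) /\
  (forall c a, phi (smul c a) = smul c (phi a)) /\
  (forall a b, phi (mul a b) = mul (phi a) (phi b)) /\
  (forall a, phi (star a) = star (phi a)).

Definition is_ideal {A : CStarAlg} (I : A -> Prop) : Prop :=
  I zero /\
  (forall a b, I a -> I b -> I (add a b)) /\
  (forall c a, I a -> I (smul c a)) /\
  (forall a b, I a -> I (mul b a) /\ I (mul a b)) /\
  (forall (u : nat -> A) l, (forall k, I (u k)) ->
     (forall eps, eps > 0 -> exists N, forall p, (p >= N)%nat -> dist (u p) l < eps) ->
     I l).

Definition ideal_decomp (A : CStarAlg) (m : nat) (I : nat -> A -> Prop) : Prop :=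
  (forall j, (j <= m)%nat -> is_ideal (I j)) /\
  (forall a : A, exists u : nat -> A,
     (forall j, (j <= m)%nat -> I j (u j)) /\ a = sumA u m).

(* points of Delta^m are functions x : nat -> R, with coordinates x 0..x m
   and x i = 0 for i > m (so points are determined by their m+1 coordinates) *)
Definition in_simplex (m : nat) (x : nat -> R) : Prop :=
  (forall i, (i <= m)%nat -> 0 <= x i <= 1) /\
  (forall i, (m < i)%nat -> x i = 0) /\
  sum_f_R0 x m = 1.

Definition Simplex (m : nat) := { x : nat -> R | in_simplex m x }.

Definition on_boundary {m} (x : Simplex m) : Prop :=
  exists i, (i <= m)%nat /\ proj1_sig x i = 0.

Definition in_face_j {m} (j : nat) (x : Simplex m) : Prop :=
  forall i, (i <= m)%nat -> proj1_sig x j <= proj1_sig x i.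

Definition continuous_on_simplex {A : CStarAlg} {m} (f : Simplex m -> A) : Prop :=
  forall x eps, eps > 0 -> exists d, d > 0 /\ forall y : Simplex m,
    (forall i, (i <= m)%nat -> Rabs (proj1_sig x i - proj1_sig y i) < d) ->
    dist (f x) (f y) < eps.

Definition inB {A : CStarAlg} (m : nat) (I : nat -> A -> Prop)
  (f : Simplex m -> A) : Prop :=
  continuous_on_simplex f /\
  (forall x, on_boundary x -> f x = zero) /\
  (forall j x, (j <= m)%nat -> in_face_j j x -> I j (f x)).

Definition inBJ {A : CStarAlg} (m : nat) (I : nat -> A -> Prop) (J : nat -> Prop)
  (f : Simplex m -> A) : Prop :=
  inB m I f /\
  (forall j' x, (j' <= m)%nat -> ~ J j' -> in_face_j j' x -> f x = zero).

Definition I01 := { t : R | 0 <= t <= 1 }.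

(* S B = continuous f : [0,1] -> B with f 0 = f 1 = 0, B carrying the sup norm.
   An element is stored uncurried as g : I01 * Simplex m -> A, with
   t |-> (x |-> g (t,x)) the function [0,1] -> B. *)
Definition inSBJ {A : CStarAlg} (m : nat) (I : nat -> A -> Prop) (J : nat -> Prop)
  (g : I01 * Simplex m -> A) : Prop :=
  (forall t, inBJ m I J (fun x => g (t, x))) /\
  (forall t x, (proj1_sig t = 0 \/ proj1_sig t = 1) -> g (t, x) = zero) /\
  (forall t eps, eps > 0 -> exists d, d > 0 /\ forall s : I01,
     Rabs (proj1_sig s - proj1_sig t) < d ->
     forall x, dist (g (s, x)) (g (t, x)) <= eps).

Definition zero_ideal (A : CStarAlg) : A -> Prop := fun a => a = zero.

Definition extend_zero {A : CStarAlg} (n : nat) (I : nat -> A -> Prop) : nat -> A -> Prop :=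
  fun j => if Nat.eqb j (S n) then zero_ideal A else I j.

Definition addJ (J : nat -> Prop) (k : nat) : nat -> Prop := fun j => J j \/ j = k.

Definition is_star_iso_on {A : CStarAlg} {X Y : Type}
  (P : (X -> A) -> Prop) (Q : (Y -> A) -> Prop) (Phi : (X -> A) -> (Y -> A)) : Prop :=
  (forall f, P f -> Q (Phi f)) /\
  (forall f g, P f -> P g -> Phi f = Phi g -> f = g) /\
  (forall h, Q h -> exists f, P f /\ Phi f = h) /\
  (forall f g, P f -> P g -> Phi (fun z => add (f z) (g z)) = (fun y => add (Phi f y) (Phi g y))) /\
  (forall c f, P f -> Phi (fun z => smul c (f z)) = (fun y => smul c (Phi f y))) /\
  (forall f g, P f -> P g -> Phi (fun z => mul (f z) (g z)) = (fun y => mul (Phi f y) (Phi g y))) /\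
  (forall f, P f -> Phi (fun z => star (f z)) = (fun y => star (Phi f y))).

(* The isomorphism is a transport of functions along an explicit map
     σ : [0,1] × Δ^n → Δ^{n+1},
     σ(t,x) = ((1-t) x_0, ..., (1-t) x_n, μ + t) / (1 + μ),   μ = min_i x_i.
   σ sends {t = 0} into the face Δ^{n+1}_{n+1}, {t = 1} to the apex y_{n+1} = 1,
   [0,1] × ∂Δ^n into ∂Δ^{n+1} and [0,1] × Δ^n_j into Δ^{n+1}_j; on {y_{n+1} < 1} it
   has the explicit inverse
     x = (y_0,...,y_n) / (1 - y_{n+1}),   t = y_{n+1} (1 + μ) - μ,
   where t <= 0 exactly on Δ^{n+1}_{n+1}.  A function g of the suspension is sent
   to h = g ∘ σ^{-1} (t clamped to [0,1]), extended by 0 at the apex; the inverse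
   is h ↦ h ∘ σ.  Continuity of h at the apex uses that g(t, ·) → 0 uniformly as
   t → 1; continuity of h ∘ σ in t uniformly in x uses uniform continuity of h. *)
From Pilot Require Import Defs.
From Stdlib Require Import Reals Lra Lia.
From Stdlib Require Import ProofIrrelevance ClassicalEpsilon Classical FunctionalExtensionality.
Open Scope R_scope.
(* [Reals] also exports a [dist] and a [C]; use the ones of the C*-algebra setting. *)
Local Notation dist := Defs.dist.
Local Notation C := Defs.C.

Arguments addA {c0}.
Arguments addC {c0}.
Arguments add0 {c0}.
Arguments addN {c0}.
Arguments smul1 {c0}.
Arguments smulDl {c0}.
Arguments smulDr {c0}.
Arguments mulDl {c0}.
Arguments starD {c0}.
Arguments normZ {c0}.
Arguments normD {c0}.

Section CStarAlgebraFacts.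
Context {A : CStarAlg}.

Lemma add0r (a : A) : add a zero = a.
Proof. rewrite addC; apply add0. Qed.

Lemma addNr (a : A) : add a (opp a) = zero.
Proof. rewrite addC; apply addN. Qed.

Lemma add_cancel_l (a b c : A) : add a b = add a c -> b = c.
Proof.
  intro H. rewrite <- (add0 b), <- (add0 c), <- (addN a), <- !addA, H. reflexivity.
Qed.

(* The only idempotent for addition is zero: this gives all the "op 0 = 0" facts. *)
Lemma idem_zero (a : A) : add a a = a -> a = zero.
Proof. intro H. apply (add_cancel_l a). rewrite H, add0r. reflexivity. Qed.

Lemma smul_zero (c : C) : smul c (@zero A) = zero.
Proof. apply idem_zero. rewrite <- smulDr, add0. reflexivity. Qed.

Lemma mul_zero : mul (@zero A) zero = zero.
Proof. apply idem_zero. rewrite <- mulDl, add0. reflexivity. Qed.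

Lemma star_zero : star (@zero A) = zero.
Proof. apply idem_zero. rewrite <- starD, add0. reflexivity. Qed.

Lemma opp_unique (a b : A) : add b a = zero -> b = opp a.
Proof. intro H. apply (add_cancel_l a). rewrite addC, H, addNr. reflexivity. Qed.

Lemma oppK (a : A) : opp (opp a) = a.
Proof. symmetry. apply opp_unique. apply addNr. Qed.

Lemma oppD (a b : A) : opp (add a b) = add (opp a) (opp b).
Proof.
  symmetry. apply opp_unique.
  rewrite <- addA, (addA (opp b)), (addC (opp b) a), <- addA, addN, add0r, addN.
  reflexivity.
Qed.

(* Scaling by -1 is the additive inverse; it is used to see that [norm] is even. *)
Lemma smulN1 (a : A) : smul (-1, 0) a = opp a.
Proof.
  apply opp_unique. rewrite <- (smul1 a) at 2. rewrite <- smulDl.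
  unfold Cadd, Cone; simpl. replace (-1 + 1) with 0 by ring. rewrite Rplus_0_r.
  apply idem_zero. rewrite <- smulDl. unfold Cadd; simpl. rewrite Rplus_0_r. reflexivity.
Qed.

Lemma dist_self (a : A) : dist a a = 0.
Proof.
  unfold dist. rewrite addNr, <- (smul_zero (0, 0)), normZ. unfold Cabs; simpl.
  replace (0 * 0 + 0 * 0) with 0 by ring. rewrite sqrt_0. ring.
Qed.

Lemma dist_sym (a b : A) : dist a b = dist b a.
Proof.
  unfold dist. replace (add b (opp a)) with (smul (-1, 0) (add a (opp b))).
  - rewrite normZ. unfold Cabs; simpl.
    replace (-1 * -1 + 0 * 0) with 1 by ring. rewrite sqrt_1. ring.
  - rewrite smulN1, oppD, oppK, addC. reflexivity.
Qed.

Lemma dist_tri (a b c : A) : dist a c <= dist a b + dist b c.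
Proof.
  unfold dist. replace (add a (opp c)) with (add (add a (opp b)) (add b (opp c))).
  - apply normD.
  - rewrite <- addA, (addA (opp b)), addN, add0. reflexivity.
Qed.

End CStarAlgebraFacts.

Lemma hom_zero {A A' : CStarAlg} (phi : A -> A') : is_star_hom phi -> phi zero = zero.
Proof. intros [Hadd _]. apply idem_zero. rewrite <- Hadd, add0. reflexivity. Qed.

(* [lra] does not use negated inequalities produced by [Rle_dec]; turn them into [<]. *)
Ltac neg_le_to_lt :=
  repeat match goal with H : ~ _ <= _ |- _ => apply Rnot_le_lt in H end.

Lemma inv_small (eps : R) :
  eps > 0 -> exists N, forall k, (k >= N)%nat -> / (INR k + 1) < eps.
Proof.
  intro He. destruct (archimed (/ eps)) as [Hup _].
  exists (Z.to_nat (up (/ eps))). intros k Hk.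
  assert (Hpos : 0 < / eps) by (apply Rinv_0_lt_compat; lra).
  assert (HN : IZR (up (/ eps)) <= INR k).
  { rewrite INR_IZR_INZ. apply IZR_le.
    assert (0 <= up (/ eps))%Z by (apply le_IZR; lra). lia. }
  rewrite <- (Rinv_inv eps). apply Rinv_lt_contravar; [| lra].
  apply Rmult_lt_0_compat; [lra |]. pose proof (pos_INR k). lra.
Qed.

Lemma inv_mono (a b : nat) : (a <= b)%nat -> / (INR b + 1) <= / (INR a + 1).
Proof.
  intro H. apply Rinv_le_contravar; [pose proof (pos_INR a); lra |].
  apply le_INR in H. lra.
Qed.

Lemma cv_from_bound (u : nat -> R) l :
  (forall k, Rabs (u k - l) < / (INR k + 1)) -> Un_cv u l.
Proof.
  intros H e He. destruct (inv_small e He) as [N HN]. exists N. intros k Hk.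
  unfold R_dist. eapply Rlt_trans; [apply H | apply HN; auto].
Qed.

Lemma cv_const (c : R) : Un_cv (fun _ => c) c.
Proof. intros e He. exists O. intros. unfold R_dist. rewrite Rminus_diag, Rabs_R0. lra. Qed.

Lemma cv_bound (u : nat -> R) l a b :
  Un_cv u l -> (forall k, a <= u k <= b) -> a <= l <= b.
Proof.
  intros Hu Hb. split.
  - destruct (Rle_or_lt a l) as [| Hl]; auto.
    destruct (Hu (a - l)) as [N HN]; [lra |].
    specialize (HN N (le_n N)). specialize (Hb N). unfold R_dist in HN.
    apply Rabs_def2 in HN. lra.
  - destruct (Rle_or_lt l b) as [| Hl]; auto.
    destruct (Hu (l - b)) as [N HN]; [lra |].
    specialize (HN N (le_n N)). specialize (Hb N). unfold R_dist in HN.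
    apply Rabs_def2 in HN. lra.
Qed.

Lemma cv_div (u v : nat -> R) l m :
  Un_cv u l -> Un_cv v m -> m <> 0 -> Un_cv (fun k => u k / v k) (l / m).
Proof.
  intros Hu Hv Hm. unfold Rdiv. apply CV_mult; auto.
  apply (continuity_seq Rinv v m); auto.
  change (continuity_pt (/ id)%F m). apply continuity_pt_inv; auto.
  apply derivable_continuous_pt, derivable_pt_id.
Qed.

Lemma Rmin_lip a b a' b' d :
  Rabs (a - a') <= d -> Rabs (b - b') <= d -> Rabs (Rmin a b - Rmin a' b') <= d.
Proof.
  unfold Rmin. destruct (Rle_dec a b), (Rle_dec a' b'); unfold Rabs in *;
    repeat destruct Rcase_abs; neg_le_to_lt; lra.
Qed.

Lemma cv_Rmin u v l m :
  Un_cv u l -> Un_cv v m -> Un_cv (fun k => Rmin (u k) (v k)) (Rmin l m).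
Proof.
  intros Hu Hv e He. destruct (Hu e He) as [N1 H1]. destruct (Hv e He) as [N2 H2].
  exists (max N1 N2). intros k Hk. unfold R_dist in *.
  assert (A1 : Rabs (u k - l) < e) by (apply H1; lia).
  assert (A2 : Rabs (v k - m) < e) by (apply H2; lia).
  destruct (Rle_dec (Rabs (u k - l)) (Rabs (v k - m))).
  - eapply Rle_lt_trans; [apply Rmin_lip | exact A2]; lra.
  - eapply Rle_lt_trans; [apply Rmin_lip | exact A1]; lra.
Qed.

Definition clamp (t : R) : R := Rmax 0 (Rmin 1 t).

Lemma clamp_in t : 0 <= clamp t <= 1.
Proof. unfold clamp, Rmax, Rmin. repeat destruct Rle_dec; neg_le_to_lt; lra. Qed.

Lemma clamp_id t : 0 <= t <= 1 -> clamp t = t.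
Proof. intro. unfold clamp, Rmax, Rmin. repeat destruct Rle_dec; neg_le_to_lt; lra. Qed.

Lemma clamp_le0 t : t <= 0 -> clamp t = 0.
Proof. intro. unfold clamp, Rmax, Rmin. repeat destruct Rle_dec; neg_le_to_lt; lra. Qed.

Lemma clamp_lip t s : Rabs (clamp t - clamp s) <= Rabs (t - s).
Proof.
  unfold clamp, Rmax, Rmin.
  repeat destruct Rle_dec; unfold Rabs; repeat destruct Rcase_abs; neg_le_to_lt; lra.
Qed.

Lemma cv_clamp u l : Un_cv u l -> Un_cv (fun k => clamp (u k)) (clamp l).
Proof.
  intros Hu e He. destruct (Hu e He) as [N H]. exists N. intros k Hk.
  unfold R_dist in *. eapply Rle_lt_trans; [apply clamp_lip | apply H; auto].
Qed.

Definition coord_cv (m : nat) (Y : nat -> nat -> R) (y : nat -> R) : Prop :=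
  forall i, (i <= m)%nat -> Un_cv (fun k => Y k i) (y i).

Lemma coord_cv_uniform m Y y : coord_cv m Y y ->
  forall d, d > 0 -> exists N, forall k, (k >= N)%nat ->
    forall i, (i <= m)%nat -> Rabs (Y k i - y i) < d.
Proof.
  induction m as [| m IH]; intros Hc d Hd.
  - destruct (Hc O (le_n _) d Hd) as [N HN]. exists N. intros k Hk i Hi.
    replace i with O by lia. apply HN; auto.
  - destruct (IH (fun i Hi => Hc i (le_S _ _ Hi)) d Hd) as [N1 H1].
    destruct (Hc (S m) (le_n _) d Hd) as [N2 H2].
    exists (max N1 N2). intros k Hk i Hi.
    destruct (Nat.eq_dec i (S m)) as [-> |]; [apply H2 | apply H1]; lia.
Qed.

Lemma cv_sum m Y y : coord_cv m Y y ->
  Un_cv (fun k => sum_f_R0 (Y k) m) (sum_f_R0 y m).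
Proof.
  induction m as [| m IH]; intros Hc; simpl.
  - apply Hc; auto.
  - apply CV_plus; [apply IH; intros i Hi | ]; apply Hc; lia.
Qed.

Definition strictly_increasing (s : nat -> nat) : Prop := forall j, (s j < s (S j))%nat.

Lemma incr_ge s : strictly_increasing s -> forall j, (j <= s j)%nat.
Proof. intros H j. induction j; [lia |]. specialize (H j). lia. Qed.

Lemma incr_mono s : strictly_increasing s -> forall i j, (i <= j)%nat -> (s i <= s j)%nat.
Proof. intros H i j Hij. induction Hij; auto. specialize (H m). lia. Qed.

Lemma cv_subseq (u : nat -> R) l s :
  Un_cv u l -> strictly_increasing s -> Un_cv (fun j => u (s j)) l.
Proof.
  intros Hu Hs e He. destruct (Hu e He) as [N H]. exists N. intros j Hj.
  apply H. pose proof (incr_ge s Hs j). lia.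
Qed.

Lemma extract1 (u : nat -> R) : (forall k, 0 <= u k <= 1) ->
  exists s l, strictly_increasing s /\ Un_cv (fun j => u (s j)) l.
Proof.
  intro Hb.
  destruct (Bolzano_Weierstrass u (fun c => 0 <= c <= 1) (compact_P3 0 1) Hb) as [l Hl].
  assert (Hp : forall N j, exists p, (N <= p)%nat /\ Rabs (u p - l) < / (INR j + 1)).
  { intros N j.
    destruct (Hl (disc l (mkposreal _ (RinvN_pos j))) N) as [p [Hp1 Hp2]].
    - exists (mkposreal _ (RinvN_pos j)). intros y Hy. exact Hy.
    - exists p. split; auto. }
  pose (pick N j := proj1_sig (constructive_indefinite_description _ (Hp N j))).
  assert (Hpick : forall N j, (N <= pick N j)%nat /\ Rabs (u (pick N j) - l) < / (INR j + 1)).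
  { intros N j. unfold pick. destruct constructive_indefinite_description; simpl; auto. }
  pose (s := fix s j := match j with O => pick O O | S j' => pick (S (s j')) (S j') end).
  exists s, l. split.
  - intro j. simpl. destruct (Hpick (S (s j)) (S j)). lia.
  - apply cv_from_bound. intro j. destruct j; simpl; apply Hpick.
Qed.

Lemma extract_coords (m : nat) (Y : nat -> nat -> R) :
  (forall k i, (i < m)%nat -> 0 <= Y k i <= 1) ->
  exists s L, strictly_increasing s /\
    forall i, (i < m)%nat -> Un_cv (fun j => Y (s j) i) (L i).
Proof.
  induction m as [| m IH]; intros Hb.
  - exists (fun j => j), (fun _ => 0). split; [intro; lia | intros; lia].
  - destruct IH as [s [L [Hs HL]]]; [intros; apply Hb; lia |].
    destruct (extract1 (fun j => Y (s j) m)) as [t [l [Ht Hl]]]; [intros; apply Hb; lia |].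
    exists (fun j => s (t j)), (fun i => if Nat.eqb i m then l else L i). split.
    + intro j. specialize (Ht j).
      pose proof (incr_mono s Hs (S (t j)) (t (S j)) ltac:(lia)). specialize (Hs (t j)). lia.
    + intros i Hi. destruct (Nat.eqb_spec i m) as [-> |].
      * exact Hl.
      * apply (cv_subseq (fun j => Y (s j) i)); auto. apply HL; lia.
Qed.

(** * Compactness of the simplex *)

Lemma simplex_eq {m} (a b : Simplex m) : proj1_sig a = proj1_sig b -> a = b.
Proof. destruct a, b; simpl; intros ->; f_equal; apply proof_irrelevance. Qed.

Lemma I01_eq (a b : I01) : proj1_sig a = proj1_sig b -> a = b.
Proof. destruct a, b; simpl; intros ->; f_equal; apply proof_irrelevance. Qed.

Definition cvA {A : CStarAlg} (u : nat -> A) (a : A) : Prop :=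
  forall eps, eps > 0 -> exists N, forall k, (k >= N)%nat -> dist (u k) a < eps.

Lemma counterexample_sequence {X : Type} (Q : R -> X -> Prop) (Good : X -> Prop) :
  ~ (exists d, d > 0 /\ forall x, Q d x -> Good x) ->
  exists w : nat -> X, forall k, Q (/ (INR k + 1)) (w k) /\ ~ Good (w k).
Proof.
  intro Hn.
  assert (Hk : forall k : nat, exists x, Q (/ (INR k + 1)) x /\ ~ Good x).
  { intro k. apply NNPP; intro H2. apply Hn. exists (/ (INR k + 1)).
    split; [apply RinvN_pos |]. intros x Hx. apply NNPP; intro H3. apply H2. eauto. }
  exists (fun k => proj1_sig (constructive_indefinite_description _ (Hk k))).
  intro k. destruct constructive_indefinite_description; auto.
Qed.

Lemma simplex_seq_compact m (Y : nat -> Simplex m) :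
  exists s (y : Simplex m), strictly_increasing s /\
    coord_cv m (fun j => proj1_sig (Y (s j))) (proj1_sig y).
Proof.
  destruct (extract_coords (S m) (fun k i => proj1_sig (Y k) i)) as [s [L [Hs HL]]].
  { intros k i Hi. apply (proj1 (proj2_sig (Y k))). lia. }
  pose (L' i := if Nat.leb i m then L i else 0).
  assert (HL' : coord_cv m (fun j => proj1_sig (Y (s j))) L').
  { intros i Hi. unfold L'. destruct (Nat.leb_spec i m); [apply HL | ]; lia. }
  assert (Hin : in_simplex m L').
  { split; [| split].
    - intros i Hi. apply (cv_bound _ _ _ _ (HL' i Hi)). intro k.
      apply (proj1 (proj2_sig (Y (s k)))); auto.
    - intros i Hi. unfold L'. destruct (Nat.leb_spec i m); [lia | auto].
    - assert (Hsum := cv_sum m _ _ HL'). cbv beta in Hsum.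
      assert (E : (fun k => sum_f_R0 (proj1_sig (Y (s k))) m) = fun _ => 1).
      { apply functional_extensionality. intro k. exact (proj2 (proj2 (proj2_sig (Y (s k))))). }
      rewrite E in Hsum. exact (UL_sequence _ _ _ Hsum (cv_const 1)). }
  exists s, (exist _ L' Hin). auto.
Qed.

Lemma seq_continuous {A : CStarAlg} {m} (F : Simplex m -> A) (y : Simplex m) :
  (forall Y : nat -> Simplex m, coord_cv m (fun k => proj1_sig (Y k)) (proj1_sig y) ->
     cvA (fun k => F (Y k)) (F y)) ->
  forall eps, eps > 0 -> exists d, d > 0 /\ forall y' : Simplex m,
    (forall i, (i <= m)%nat -> Rabs (proj1_sig y i - proj1_sig y' i) < d) ->
    dist (F y) (F y') < eps.
Proof.
  intros H eps He. apply NNPP; intro Hn.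
  destruct (counterexample_sequence _ _ Hn) as [Y HY].
  destruct (H Y) with (eps := eps) as [N HN]; auto.
  - intros i Hi. apply cv_from_bound. intro k. rewrite Rabs_minus_sym. apply HY; auto.
  - apply (proj2 (HY N)). rewrite dist_sym. apply HN. lia.
Qed.

Lemma unif_continuous {A : CStarAlg} {m} (h : Simplex m -> A) :
  continuous_on_simplex h ->
  forall eps, eps > 0 -> exists d, d > 0 /\ forall y y' : Simplex m,
    (forall i, (i <= m)%nat -> Rabs (proj1_sig y i - proj1_sig y' i) < d) ->
    dist (h y) (h y') < eps.
Proof.
  intros Hc eps He. apply NNPP; intro Hn.
  destruct (counterexample_sequence
    (fun d (p : Simplex m * Simplex m) =>
       forall i, (i <= m)%nat -> Rabs (proj1_sig (fst p) i - proj1_sig (snd p) i) < d)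
    (fun p => dist (h (fst p)) (h (snd p)) < eps)) as [P HP].
  { intros [d [Hd H]]. apply Hn. exists d. split; auto. intros y y'. apply (H (y, y')). }
  destruct (simplex_seq_compact m (fun k => fst (P k))) as [s [l [Hs Hl]]].
  destruct (Hc l (eps / 2)) as [d [Hd Hnear]]; [lra |].
  destruct (coord_cv_uniform m _ _ Hl (d / 2)) as [N1 H1]; [lra |].
  destruct (inv_small (d / 2)) as [N2 H2]; [lra |].
  set (k := max N1 N2). set (a := fst (P (s k))). set (b := snd (P (s k))).
  assert (Hla : forall i, (i <= m)%nat -> Rabs (proj1_sig a i - proj1_sig l i) < d / 2)
    by (intros; apply H1; auto; lia).
  assert (Hab : forall i, (i <= m)%nat -> Rabs (proj1_sig a i - proj1_sig b i) < d / 2).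
  { intros i Hi. eapply Rlt_le_trans; [apply (proj1 (HP (s k))); auto |].
    eapply Rle_trans; [apply inv_mono, (incr_ge s Hs k) |]. left. apply H2. lia. }
  assert (Ha : dist (h l) (h a) < eps / 2).
  { apply Hnear. intros i Hi. rewrite Rabs_minus_sym. specialize (Hla i Hi). lra. }
  assert (Hb : dist (h l) (h b) < eps / 2).
  { apply Hnear. intros i Hi.
    specialize (Hla i Hi). specialize (Hab i Hi). unfold Rabs in *.
    repeat destruct Rcase_abs; lra. }
  apply (proj2 (HP (s k))). fold a b.
  eapply Rle_lt_trans; [apply (dist_tri _ (h l)) |]. rewrite dist_sym. lra.
Qed.

Lemma div_le_compat (a c b : R) : 0 < b -> a <= c -> a / b <= c / b.
Proof.
  intros. unfold Rdiv. apply Rmult_le_compat_r; auto. left. apply Rinv_0_lt_compat; auto.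
Qed.

Lemma div_nonneg (a b : R) : 0 <= a -> 0 < b -> 0 <= a / b.
Proof. intros. unfold Rdiv. apply Rmult_le_pos; auto. left. apply Rinv_0_lt_compat; auto. Qed.

Lemma div_le1 (a b : R) : a <= b -> 0 < b -> a / b <= 1.
Proof. intros. replace 1 with (b / b) by (field; lra). apply div_le_compat; auto. Qed.

Lemma sum_ge_term (f : nat -> R) (k i : nat) :
  (forall j, (j <= k)%nat -> 0 <= f j) -> (i <= k)%nat -> f i <= sum_f_R0 f k.
Proof.
  intros Hp Hi. induction k as [| k IH]; simpl.
  - replace i with O by lia. lra.
  - assert (Hsum : 0 <= sum_f_R0 f k).
    { eapply Rle_trans; [| apply (sum_Rle (fun _ => 0)); intros; apply Hp; lia].
      rewrite sum_cte. lra. }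
    assert (Hlast := Hp (S k) (le_n _)).
    destruct (Nat.eq_dec i (S k)) as [-> | Hne]; [lra |].
    assert (f i <= sum_f_R0 f k) by (apply IH; [intros; apply Hp |]; lia). lra.
Qed.

Fixpoint min_coord (x : nat -> R) (k : nat) : R :=
  match k with O => x O | S k' => Rmin (min_coord x k') (x (S k')) end.

Lemma min_coord_le x k i : (i <= k)%nat -> min_coord x k <= x i.
Proof.
  induction k as [| k IH]; intro Hi; simpl.
  - replace i with O by lia. lra.
  - destruct (Nat.eq_dec i (S k)) as [-> |]; [apply Rmin_r |].
    eapply Rle_trans; [apply Rmin_l | apply IH; lia].
Qed.

Lemma min_coord_glb x k c : (forall i, (i <= k)%nat -> c <= x i) -> c <= min_coord x k.
Proof.
  induction k as [| k IH]; intro H; simpl; [apply H; lia |].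
  apply Rmin_glb; [apply IH; intros |]; apply H; lia.
Qed.

Lemma cv_min_coord k Y y : coord_cv k Y y ->
  Un_cv (fun j => min_coord (Y j) k) (min_coord y k).
Proof.
  induction k as [| k IH]; intro H; simpl; [apply H; lia |].
  apply cv_Rmin; [apply IH; intros i Hi |]; apply H; lia.
Qed.

Lemma min_coord_bounds n (x : Simplex n) : 0 <= min_coord (proj1_sig x) n <= 1.
Proof.
  destruct x as [v Hin]; simpl; destruct Hin as [Hv _]. split.
  - apply min_coord_glb. intros; apply Hv; auto.
  - eapply Rle_trans; [apply (min_coord_le v n O); lia | apply Hv; lia].
Qed.

(** * The map σ : [0,1] × Δ^n → Δ^{n+1} *)

Section SuspensionMap.
Variable n : nat.

Definition susp_coords (t : R) (x : nat -> R) : nat -> R := fun i =>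
  if Nat.leb i n then (1 - t) * x i / (1 + min_coord x n)
  else if Nat.eqb i (S n) then (min_coord x n + t) / (1 + min_coord x n) else 0.

Lemma susp_coords_lo t x i : (i <= n)%nat ->
  susp_coords t x i = (1 - t) * x i / (1 + min_coord x n).
Proof. intro H. unfold susp_coords. destruct (Nat.leb_spec i n); [reflexivity | lia]. Qed.

Lemma susp_coords_top t x : susp_coords t x (S n) = (min_coord x n + t) / (1 + min_coord x n).
Proof.
  unfold susp_coords. destruct (Nat.leb_spec (S n) n); [lia |]. rewrite Nat.eqb_refl. reflexivity.
Qed.

Lemma susp_coords_hi t x i : (S n < i)%nat -> susp_coords t x i = 0.
Proof.
  intro H. unfold susp_coords. destruct (Nat.leb_spec i n); [lia |].
  destruct (Nat.eqb_spec i (S n)); [lia | reflexivity].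
Qed.

Lemma susp_coords_simplex (t : I01) (x : Simplex n) :
  in_simplex (S n) (susp_coords (proj1_sig t) (proj1_sig x)).
Proof.
  pose proof (min_coord_bounds n x) as Hm.
  destruct t as [t Ht]. destruct x as [x [Hx1 [Hx2 Hx3]]]. simpl in *.
  set (mu := min_coord x n) in *.
  split; [| split].
  - intros i Hi. destruct (Nat.eq_dec i (S n)) as [-> |].
    + rewrite susp_coords_top. fold mu. split; [apply div_nonneg | apply div_le1]; lra.
    + rewrite susp_coords_lo by lia. fold mu. pose proof (Hx1 i ltac:(lia)).
      split; [apply div_nonneg; [apply Rmult_le_pos |] | apply div_le1]; try lra.
      assert ((1 - t) * x i <= 1 * 1) by (apply Rmult_le_compat; lra). lra.
  - intros i Hi. apply susp_coords_hi. auto.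
  - simpl. rewrite susp_coords_top. fold mu.
    rewrite (sum_eq _ (fun i => x i * ((1 - t) / (1 + mu)))).
    + rewrite <- scal_sum, Hx3. field. lra.
    + intros i Hi. rewrite susp_coords_lo by auto. fold mu. field. lra.
Qed.

Definition susp_point (p : I01 * Simplex n) : Simplex (S n) :=
  exist _ (susp_coords (proj1_sig (fst p)) (proj1_sig (snd p)))
    (susp_coords_simplex (fst p) (snd p)).

Lemma susp_t0_face (t : I01) (x : Simplex n) :
  proj1_sig t = 0 -> in_face_j (S n) (susp_point (t, x)).
Proof.
  intros H0 i Hi. simpl. rewrite H0. pose proof (min_coord_bounds n x).
  destruct (Nat.eq_dec i (S n)) as [-> |]; [lra |].
  rewrite susp_coords_top, susp_coords_lo by lia. apply div_le_compat; [lra |].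
  pose proof (min_coord_le (proj1_sig x) n i ltac:(lia)). lra.
Qed.

(* σ(1, x) lies on the boundary (its first n+1 coordinates vanish). *)
Lemma susp_t1_boundary (t : I01) (x : Simplex n) :
  proj1_sig t = 1 -> on_boundary (susp_point (t, x)).
Proof.
  intro H1. exists O. split; [lia |]. simpl. rewrite susp_coords_lo, H1 by lia.
  unfold Rdiv. ring.
Qed.

Lemma susp_boundary (t : I01) (x : Simplex n) :
  on_boundary x -> on_boundary (susp_point (t, x)).
Proof.
  intros [i [Hi H0]]. exists i. split; [lia |]. simpl.
  rewrite susp_coords_lo, H0 by auto. unfold Rdiv. ring.
Qed.

Lemma susp_face (t : I01) (x : Simplex n) j :
  (j <= n)%nat -> in_face_j j x -> in_face_j j (susp_point (t, x)).
Proof.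
  intros Hj Hf i Hi. simpl. pose proof (min_coord_bounds n x).
  pose proof (proj2_sig t) as Ht. simpl in Ht.
  rewrite (susp_coords_lo _ _ j) by auto.
  destruct (Nat.eq_dec i (S n)) as [-> |].
  - rewrite susp_coords_top. apply div_le_compat; [lra |].
    pose proof (min_coord_glb (proj1_sig x) n (proj1_sig x j) Hf).
    pose proof (proj1 (proj2_sig x) j Hj).
    assert ((1 - proj1_sig t) * proj1_sig x j <= 1 * proj1_sig x j)
      by (apply Rmult_le_compat_r; lra). lra.
  - rewrite susp_coords_lo by lia. apply div_le_compat; [lra |].
    apply Rmult_le_compat_l; [lra |]. apply Hf. lia.
Qed.

Lemma susp_lipschitz_t (s t : I01) (x : Simplex n) i : (i <= S n)%nat ->
  Rabs (proj1_sig (susp_point (s, x)) i - proj1_sig (susp_point (t, x)) i)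
    <= Rabs (proj1_sig s - proj1_sig t).
Proof.
  intro Hi. simpl. pose proof (min_coord_bounds n x).
  set (a := proj1_sig s). set (b := proj1_sig t). set (mu := min_coord (proj1_sig x) n) in *.
  assert (Hc : forall c, 0 <= c <= 1 -> Rabs ((a - b) * c) <= Rabs (a - b)).
  { intros c Hcb. rewrite Rabs_mult, (Rabs_right c) by lra.
    rewrite <- (Rmult_1_r (Rabs (a - b))) at 2.
    apply Rmult_le_compat_l; [apply Rabs_pos | lra]. }
  destruct (Nat.eq_dec i (S n)) as [-> |].
  - rewrite !susp_coords_top. fold mu.
    replace ((mu + a) / (1 + mu) - (mu + b) / (1 + mu)) with ((a - b) * / (1 + mu))
      by (field; lra).
    apply Hc. split; [left; apply Rinv_0_lt_compat; lra |].
    rewrite <- Rinv_1. apply Rinv_le_contravar; lra.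
  - rewrite !susp_coords_lo by lia. fold mu. pose proof (proj1 (proj2_sig x) i ltac:(lia)).
    replace ((1 - a) * proj1_sig x i / (1 + mu) - (1 - b) * proj1_sig x i / (1 + mu))
      with ((a - b) * - (proj1_sig x i / (1 + mu))) by (field; lra).
    rewrite Rabs_mult, Rabs_Ropp, <- Rabs_mult. apply Hc.
    split; [apply div_nonneg | apply div_le1]; lra.
Qed.

Lemma susp_continuous_x t (x : Simplex n) (Y : nat -> Simplex n) :
  coord_cv n (fun k => proj1_sig (Y k)) (proj1_sig x) ->
  coord_cv (S n) (fun k => susp_coords t (proj1_sig (Y k))) (susp_coords t (proj1_sig x)).
Proof.
  intros Hc i Hi. pose proof (min_coord_bounds n x).
  pose proof (cv_min_coord n _ _ Hc) as Hmu. cbv beta in Hmu.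
  destruct (Nat.eq_dec i (S n)) as [-> |].
  - rewrite susp_coords_top.
    apply (Un_cv_ext (fun k => (min_coord (proj1_sig (Y k)) n + t)
                                           / (1 + min_coord (proj1_sig (Y k)) n))).
    + intro k. symmetry. apply susp_coords_top.
    + apply cv_div; [apply CV_plus; [exact Hmu | apply cv_const] |
        apply CV_plus; [apply cv_const | exact Hmu] | lra].
  - rewrite susp_coords_lo by lia.
    apply (Un_cv_ext (fun k => (1 - t) * proj1_sig (Y k) i
                                           / (1 + min_coord (proj1_sig (Y k)) n))).
    + intro k. symmetry. apply susp_coords_lo. lia.
    + apply cv_div; [apply CV_mult; [apply cv_const | apply Hc; lia] |
        apply CV_plus; [apply cv_const | exact Hmu] | lra].
Qed.

End SuspensionMap.

(** * The inverse of σ on {y_{n+1} < 1} *)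

Section InverseMap.
Variable n : nat.

Definition base_coords (y : nat -> R) : nat -> R := fun i =>
  if Nat.leb i n then y i / (1 - y (S n)) else 0.

Definition time_coord (y : nat -> R) : R :=
  y (S n) * (1 + min_coord (base_coords y) n) - min_coord (base_coords y) n.

Lemma base_coords_lo y i : (i <= n)%nat -> base_coords y i = y i / (1 - y (S n)).
Proof. intro H. unfold base_coords. destruct (Nat.leb_spec i n); [reflexivity | lia]. Qed.

Lemma sum_below_top (y : Simplex (S n)) :
  sum_f_R0 (proj1_sig y) n = 1 - proj1_sig y (S n).
Proof. destruct y as [v Hv]; simpl; destruct Hv as [_ [_ Hs]]. simpl in Hs. lra. Qed.

Lemma base_coords_simplex (y : Simplex (S n)) :
  proj1_sig y (S n) < 1 -> in_simplex n (base_coords (proj1_sig y)).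
Proof.
  intro Hlt. pose proof (sum_below_top y) as Hs.
  destruct y as [y [Hy1 [Hy2 Hy3]]]. simpl in *.
  split; [| split].
  - intros i Hi. rewrite base_coords_lo by auto. pose proof (Hy1 i ltac:(lia)).
    split; [apply div_nonneg | apply div_le1]; try lra.
    rewrite <- Hs. apply sum_ge_term; auto. intros; apply Hy1; lia.
  - intros i Hi. unfold base_coords. destruct (Nat.leb_spec i n); [lia | reflexivity].
  - rewrite (sum_eq _ (fun i => y i * / (1 - y (S n)))).
    + rewrite <- scal_sum, Hs. field. lra.
    + intros i Hi. rewrite base_coords_lo by auto. reflexivity.
Qed.

Lemma min_base_nonneg (y : Simplex (S n)) :
  proj1_sig y (S n) < 1 -> 0 <= min_coord (base_coords (proj1_sig y)) n.
Proof.
  intro Hl. apply min_coord_glb. intros i Hi. rewrite base_coords_lo by auto.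
  apply div_nonneg; [apply (proj1 (proj2_sig y)); lia | lra].
Qed.

(* Points of Δ^n and of [0,1] from raw coordinates (a fixed vertex, resp. clamping,
   when the coordinates are out of range). *)
Definition vertex0 : nat -> R := fun i => if Nat.eqb i O then 1 else 0.

Lemma vertex0_simplex m : in_simplex m vertex0.
Proof.
  split; [| split].
  - intros i _. unfold vertex0. destruct (Nat.eqb i O); lra.
  - intros i Hi. unfold vertex0. destruct (Nat.eqb_spec i O); [lia | reflexivity].
  - induction m as [| m IH]; simpl; [reflexivity |]. rewrite IH. unfold vertex0. simpl. ring.
Qed.

Definition mk_simplex (m : nat) (x : nat -> R) : Simplex m :=
  match excluded_middle_informative (in_simplex m x) with
  | left H => exist _ x H
  | right _ => exist _ vertex0 (vertex0_simplex m)
  end.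

Lemma mk_simplex_val m x : in_simplex m x -> proj1_sig (mk_simplex m x) = x.
Proof.
  intro H. unfold mk_simplex.
  destruct excluded_middle_informative; [reflexivity | contradiction].
Qed.

Definition mk_I01 (t : R) : I01 := exist _ (clamp t) (clamp_in t).

Definition base_point (y : Simplex (S n)) : Simplex n := mk_simplex n (base_coords (proj1_sig y)).
Definition time_point (y : Simplex (S n)) : I01 := mk_I01 (time_coord (proj1_sig y)).

Lemma base_point_val (y : Simplex (S n)) :
  proj1_sig y (S n) < 1 -> proj1_sig (base_point y) = base_coords (proj1_sig y).
Proof. intro. apply mk_simplex_val, base_coords_simplex; auto. Qed.

Lemma inverse_susp (t : I01) (x : Simplex n) : proj1_sig t < 1 ->
  proj1_sig (susp_point n (t, x)) (S n) < 1 /\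
  time_point (susp_point n (t, x)) = t /\ base_point (susp_point n (t, x)) = x.
Proof.
  intro Hlt. pose proof (min_coord_bounds n x). pose proof (proj2_sig t) as Ht. simpl in Ht.
  assert (Hbase : base_coords (susp_coords n (proj1_sig t) (proj1_sig x)) = proj1_sig x).
  { apply functional_extensionality; intro i. unfold base_coords.
    destruct (Nat.leb_spec i n).
    - rewrite susp_coords_lo, susp_coords_top by auto. field. lra.
    - symmetry. apply (proj1 (proj2 (proj2_sig x))). auto. }
  split; [| split].
  - simpl. rewrite susp_coords_top. set (mu := min_coord (proj1_sig x) n) in *.
    replace ((mu + proj1_sig t) / (1 + mu)) with (1 - (1 - proj1_sig t) / (1 + mu))
      by (field; lra).
    assert (0 < (1 - proj1_sig t) / (1 + mu)) by (apply Rdiv_lt_0_compat; lra). lra.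
  - apply I01_eq. unfold time_point, mk_I01, time_coord. simpl proj1_sig.
    rewrite Hbase, susp_coords_top. set (mu := min_coord (proj1_sig x) n) in *.
    replace ((mu + proj1_sig t) / (1 + mu) * (1 + mu) - mu) with (proj1_sig t)
      by (field; lra).
    apply clamp_id. lra.
  - apply simplex_eq. unfold base_point. simpl proj1_sig at 2. rewrite Hbase.
    apply mk_simplex_val, (proj2_sig x).
Qed.

Lemma susp_inverse (y : Simplex (S n)) :
  proj1_sig y (S n) < 1 -> 0 <= time_coord (proj1_sig y) ->
  susp_point n (time_point y, base_point y) = y.
Proof.
  intros Hl Ht. apply simplex_eq. pose proof (min_base_nonneg y Hl). simpl.
  rewrite base_point_val by auto.
  assert (Ht1 : time_coord (proj1_sig y) <= 1).
  { unfold time_coord.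
    assert (0 <= min_coord (base_coords (proj1_sig y)) n * (1 - proj1_sig y (S n)))
      by (apply Rmult_le_pos; lra). nra. }
  rewrite clamp_id by lra. unfold time_coord in *.
  apply functional_extensionality; intro i.
  set (v := proj1_sig y) in *. set (mu := min_coord (base_coords v) n) in *.
  destruct (Compare_dec.le_lt_dec i n).
  - rewrite susp_coords_lo by auto. fold mu. rewrite base_coords_lo by auto. field. lra.
  - destruct (Nat.eq_dec i (S n)) as [-> |].
    + rewrite susp_coords_top. fold mu. field. lra.
    + rewrite susp_coords_hi by lia. symmetry. apply (proj1 (proj2 (proj2_sig y))). lia.
Qed.

Lemma face_top_time (y : Simplex (S n)) :
  proj1_sig y (S n) < 1 -> in_face_j (S n) y -> time_coord (proj1_sig y) <= 0.
Proof.
  intros Hl Hf. unfold time_coord. set (v := proj1_sig y) in *.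
  set (mu := min_coord (base_coords v) n).
  assert (Hc : v (S n) / (1 - v (S n)) <= mu).
  { apply min_coord_glb. intros i Hi. rewrite base_coords_lo by auto.
    apply div_le_compat; [lra |]. apply Hf. lia. }
  apply (Rmult_le_compat_r (1 - v (S n))) in Hc; [| lra].
  replace (v (S n) / (1 - v (S n)) * (1 - v (S n))) with (v (S n)) in Hc by (field; lra).
  lra.
Qed.

Lemma time_neg_face_top (y : Simplex (S n)) :
  proj1_sig y (S n) < 1 -> time_coord (proj1_sig y) < 0 -> in_face_j (S n) y.
Proof.
  intros Hl Ht i Hi. unfold time_coord in Ht. set (v := proj1_sig y) in *.
  set (mu := min_coord (base_coords v) n) in *.
  destruct (Nat.eq_dec i (S n)) as [-> |]; [lra |].
  assert (H1 : mu <= v i / (1 - v (S n)))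
    by (rewrite <- base_coords_lo by lia; apply min_coord_le; lia).
  apply (Rmult_le_compat_r (1 - v (S n))) in H1; [| lra].
  replace (v i / (1 - v (S n)) * (1 - v (S n))) with (v i) in H1 by (field; lra).
  lra.
Qed.

Lemma bottom_time (y : Simplex (S n)) :
  proj1_sig y (S n) = 0 -> time_coord (proj1_sig y) <= 0.
Proof. intro H0. pose proof (min_base_nonneg y ltac:(lra)). unfold time_coord. rewrite H0. lra. Qed.

Lemma time_near_apex (y : Simplex (S n)) : proj1_sig y (S n) < 1 ->
  Rabs (time_coord (proj1_sig y) - 1) <= 2 * (1 - proj1_sig y (S n)).
Proof.
  intro Hl. pose proof (min_base_nonneg y Hl).
  pose proof (min_coord_bounds n (base_point y)) as Hb. rewrite base_point_val in Hb by auto.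
  unfold time_coord. set (v := proj1_sig y (S n)) in *.
  set (mu := min_coord (base_coords (proj1_sig y)) n) in *.
  rewrite Rabs_left1 by nra. nra.
Qed.

Lemma apex_boundary (y : Simplex (S n)) : ~ proj1_sig y (S n) < 1 -> on_boundary y.
Proof.
  intro Hn. exists O. split; [lia |]. pose proof (sum_below_top y).
  pose proof (proj1 (proj2_sig y)) as Hb.
  pose proof (Hb (S n) (le_n _)). pose proof (Hb O ltac:(lia)).
  assert (proj1_sig y O <= sum_f_R0 (proj1_sig y) n)
    by (apply sum_ge_term; [intros; apply Hb |]; lia).
  lra.
Qed.

Lemma base_boundary (y : Simplex (S n)) i :
  proj1_sig y (S n) < 1 -> (i <= n)%nat -> proj1_sig y i = 0 -> on_boundary (base_point y).
Proof.
  intros Hl Hi H0. exists i. split; auto.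
  rewrite base_point_val, base_coords_lo, H0 by auto. unfold Rdiv; ring.
Qed.

Lemma base_face (y : Simplex (S n)) j :
  proj1_sig y (S n) < 1 -> (j <= n)%nat -> in_face_j j y -> in_face_j j (base_point y).
Proof.
  intros Hl Hj Hf i Hi. rewrite base_point_val, !base_coords_lo by auto.
  apply div_le_compat; [lra |]. apply Hf. lia.
Qed.

Lemma base_continuous (Y : nat -> Simplex (S n)) (y : Simplex (S n)) :
  proj1_sig y (S n) < 1 -> coord_cv (S n) (fun k => proj1_sig (Y k)) (proj1_sig y) ->
  coord_cv n (fun k => base_coords (proj1_sig (Y k))) (base_coords (proj1_sig y)).
Proof.
  intros Hl HY i Hi. rewrite base_coords_lo by auto.
  apply (Un_cv_ext (fun k => proj1_sig (Y k) i / (1 - proj1_sig (Y k) (S n)))).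
  - intro k. symmetry. apply base_coords_lo. auto.
  - apply cv_div; [apply HY; lia | apply CV_minus; [apply cv_const | apply HY; lia] | lra].
Qed.

Lemma time_continuous (Y : nat -> Simplex (S n)) (y : Simplex (S n)) :
  proj1_sig y (S n) < 1 -> coord_cv (S n) (fun k => proj1_sig (Y k)) (proj1_sig y) ->
  Un_cv (fun k => time_coord (proj1_sig (Y k))) (time_coord (proj1_sig y)).
Proof.
  intros Hl HY. unfold time_coord.
  pose proof (cv_min_coord n _ _ (base_continuous Y y Hl HY)) as Hm.
  apply CV_minus; [apply CV_mult; [apply HY; lia | apply CV_plus; [apply cv_const |]] |]; exact Hm.
Qed.

End InverseMap.

(** * Transport of functions along σ *)

Section Transfer.
Variable n : nat.
Context {A : CStarAlg}.

Definition transfer (g : I01 * Simplex n -> A) (y : Simplex (S n)) : A :=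
  if Rlt_dec (proj1_sig y (S n)) 1 then g (time_point n y, base_point n y) else zero.

Lemma transfer_interior g y : proj1_sig y (S n) < 1 ->
  transfer g y = g (time_point n y, base_point n y).
Proof. intro H. unfold transfer. destruct Rlt_dec; [reflexivity | contradiction]. Qed.

Lemma transfer_apex g y : ~ proj1_sig y (S n) < 1 -> transfer g y = zero.
Proof. intro H. unfold transfer. destruct Rlt_dec; [contradiction | reflexivity]. Qed.

(* Where the time coordinate is <= 0 (e.g. on Δ^{n+1}_{n+1}) the transfer takes values
   of g(0, ·). *)
Lemma transfer_time_nonpos g y :
  (forall t x, proj1_sig t = 0 -> g (t, x) = zero) ->
  time_coord n (proj1_sig y) <= 0 -> transfer g y = zero.
Proof.
  intros Hg0 Ht. destruct (Rlt_dec (proj1_sig y (S n)) 1) as [r | r].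
  - rewrite transfer_interior by auto. apply Hg0. simpl. apply clamp_le0. auto.
  - apply transfer_apex; auto.
Qed.

Lemma transfer_susp g : (forall t x, proj1_sig t = 1 -> g (t, x) = zero) ->
  forall p, g p = transfer g (susp_point n p).
Proof.
  intros Hg1 [t x]. destruct (Rlt_dec (proj1_sig t) 1) as [r | r].
  - destruct (inverse_susp n t x r) as [Hl [Ht Hx]].
    rewrite transfer_interior by auto.
    exact (f_equal g (f_equal2 pair (eq_sym Ht) (eq_sym Hx))).
  - pose proof (proj2_sig t) as Ht. simpl in Ht.
    assert (Ht1 : proj1_sig t = 1) by lra.
    rewrite Hg1 by auto. symmetry. apply transfer_apex.
    simpl. rewrite susp_coords_top, Ht1. pose proof (min_coord_bounds n x).
    replace ((min_coord (proj1_sig x) n + 1) / (1 + min_coord (proj1_sig x) n)) with 1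
      by (field; lra). lra.
Qed.

Lemma transfer_pullback (h : Simplex (S n) -> A) :
  (forall y, on_boundary y -> h y = zero) -> (forall y, in_face_j (S n) y -> h y = zero) ->
  transfer (fun p => h (susp_point n p)) = h.
Proof.
  intros Hb Hf. apply functional_extensionality; intro y.
  destruct (Rlt_dec (proj1_sig y (S n)) 1) as [r | r].
  - rewrite transfer_interior by auto.
    destruct (Rle_lt_dec 0 (time_coord n (proj1_sig y))) as [r2 | r2].
    + rewrite susp_inverse; auto.
    + rewrite Hf, (Hf y); auto; [apply time_neg_face_top; auto |].
      apply susp_t0_face. simpl. apply clamp_le0. lra.
  - rewrite transfer_apex, Hb; auto. apply apex_boundary; auto.
Qed.

End Transfer.

(* The transfer is defined pointwise, hence commutes with zero-preserving operations. *)
Lemma transfer_map {A A' : CStarAlg} n (F : A -> A') (g : I01 * Simplex n -> A) :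
  F zero = zero -> transfer n (fun z => F (g z)) = fun y => F (transfer n g y).
Proof.
  intro HF. apply functional_extensionality; intro y. unfold transfer.
  destruct Rlt_dec; [reflexivity | auto].
Qed.

Lemma transfer_map2 {A : CStarAlg} n (op : A -> A -> A) (f g : I01 * Simplex n -> A) :
  op zero zero = zero ->
  transfer n (fun z => op (f z) (g z)) = fun y => op (transfer n f y) (transfer n g y).
Proof.
  intro Hop. apply functional_extensionality; intro y. unfold transfer.
  destruct Rlt_dec; [reflexivity | auto].
Qed.

Section TransferContinuity.
Variable n : nat.
Context {A : CStarAlg}.
Variable g : I01 * Simplex n -> A.
Hypothesis g_continuous_x : forall t, continuous_on_simplex (fun x => g (t, x)).
Hypothesis g_vanishes_t1 : forall t x, proj1_sig t = 1 -> g (t, x) = zero.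
Hypothesis g_equicontinuous_t : forall t eps, eps > 0 -> exists d, d > 0 /\ forall s : I01,
  Rabs (proj1_sig s - proj1_sig t) < d -> forall x, dist (g (s, x)) (g (t, x)) <= eps.

(* Off the apex, transfer g = g ∘ σ^{-1} is a composition of continuous maps. *)
Lemma transfer_cv_interior (Y : nat -> Simplex (S n)) (y : Simplex (S n)) :
  proj1_sig y (S n) < 1 -> coord_cv (S n) (fun k => proj1_sig (Y k)) (proj1_sig y) ->
  cvA (fun k => transfer n g (Y k)) (transfer n g y).
Proof.
  intros Hl HY eps He.
  destruct (HY (S n) (le_n _) (1 - proj1_sig y (S n))) as [N0 HN0]; [lra |].
  set (T := time_point n y). set (X := base_point n y).
  destruct (g_continuous_x T X (eps / 2)) as [d2 [Hd2 Hx]]; [lra |].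
  destruct (g_equicontinuous_t T (eps / 2)) as [d1 [Hd1 Ht]]; [lra |].
  destruct (coord_cv_uniform n _ _ (base_continuous n Y y Hl HY) d2 Hd2) as [N2 HN2].
  destruct (cv_clamp _ _ (time_continuous n Y y Hl HY) d1 Hd1) as [N1 HN1].
  exists (max N0 (max N1 N2)). intros k Hk.
  assert (Hk1 : proj1_sig (Y k) (S n) < 1).
  { specialize (HN0 k ltac:(lia)). unfold R_dist in HN0. apply Rabs_def2 in HN0. lra. }
  rewrite !transfer_interior by auto. fold T X. set (Xk := base_point n (Y k)).
  assert (Htime : dist (g (time_point n (Y k), Xk)) (g (T, Xk)) <= eps / 2)
    by (apply Ht, HN1; lia).
  assert (Hbase : dist (g (T, X)) (g (T, Xk)) < eps / 2).
  { apply Hx. intros i Hi. unfold X, Xk. rewrite !base_point_val by auto.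
    rewrite Rabs_minus_sym. apply HN2; auto; lia. }
  eapply Rle_lt_trans; [apply (dist_tri _ (g (T, Xk))) |].
  rewrite (dist_sym (g (T, Xk))). lra.
Qed.

(* At the apex the time coordinate tends to 1, where g vanishes uniformly in x. *)
Lemma transfer_cv_apex (Y : nat -> Simplex (S n)) (y : Simplex (S n)) :
  ~ proj1_sig y (S n) < 1 -> coord_cv (S n) (fun k => proj1_sig (Y k)) (proj1_sig y) ->
  cvA (fun k => transfer n g (Y k)) (transfer n g y).
Proof.
  intros Hy HY eps He. rewrite (transfer_apex n g y Hy).
  assert (Hy1 : proj1_sig y (S n) = 1)
    by (pose proof (proj1 (proj2_sig y) (S n) (le_n _)); lra).
  set (one := mk_I01 1).
  destruct (g_equicontinuous_t one (eps / 2)) as [d [Hd Ht]]; [lra |].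
  destruct (HY (S n) (le_n _) (d / 2)) as [N HN]; [lra |].
  exists N. intros k Hk. specialize (HN k Hk). unfold R_dist in HN.
  rewrite Hy1 in HN. apply Rabs_def2 in HN.
  destruct (Rlt_dec (proj1_sig (Y k) (S n)) 1) as [r | r].
  - rewrite transfer_interior by auto.
    rewrite <- (g_vanishes_t1 one (base_point n (Y k))) by (apply clamp_id; lra).
    eapply Rle_lt_trans; [apply Ht | lra]. simpl.
    eapply Rle_lt_trans; [apply clamp_lip |].
    pose proof (time_near_apex n (Y k) r). lra.
  - rewrite transfer_apex, dist_self by auto. lra.
Qed.

Lemma transfer_continuous : continuous_on_simplex (transfer n g).
Proof.
  intro y. apply seq_continuous. intros Y HY.
  destruct (Rlt_dec (proj1_sig y (S n)) 1).
  - apply transfer_cv_interior; auto.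
  - apply transfer_cv_apex; auto.
Qed.

End TransferContinuity.

Lemma extend_zero_top n {A : CStarAlg} (I : nat -> A -> Prop) a :
  extend_zero n I (S n) a <-> a = zero.
Proof. unfold extend_zero. rewrite Nat.eqb_refl. unfold zero_ideal. tauto. Qed.

Lemma extend_zero_lo n {A : CStarAlg} (I : nat -> A -> Prop) j :
  (j <= n)%nat -> extend_zero n I j = I j.
Proof. intro H. unfold extend_zero. destruct (Nat.eqb_spec j (S n)); [lia | reflexivity]. Qed.

Lemma susp_vanishes_t1 {A : CStarAlg} {n I J} {g : I01 * Simplex n -> A} :
  inSBJ n I J g -> forall t x, proj1_sig t = 1 -> g (t, x) = zero.
Proof. intros [_ [Hends _]] t x Ht. apply Hends. auto. Qed.

Lemma transfer_mem n (A : CStarAlg) I J (g : I01 * Simplex n -> A) :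
  ideal_decomp A n I -> inSBJ n I J g ->
  inBJ (S n) (extend_zero n I) (addJ J (S n)) (transfer n g).
Proof.
  intros [Hideal _] [Hg [Hends Hequi]].
  assert (Hg0 : forall t x, proj1_sig t = 0 -> g (t, x) = zero) by (intros; apply Hends; auto).
  split; [split; [| split] |].
  - apply transfer_continuous; auto. intro t. apply (Hg t).
  - intros y [i [Hi H0]].
    destruct (Rlt_dec (proj1_sig y (S n)) 1) as [r | r]; [| apply transfer_apex; auto].
    destruct (Nat.eq_dec i (S n)) as [-> |].
    + apply transfer_time_nonpos, bottom_time; auto.
    + rewrite transfer_interior by auto. apply (Hg _). apply (base_boundary n y i); auto; lia.
  - intros j y Hj Hf.
    destruct (Rlt_dec (proj1_sig y (S n)) 1) as [r | r].
    + destruct (Nat.eq_dec j (S n)) as [-> |].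
      * apply extend_zero_top, transfer_time_nonpos, face_top_time; auto.
      * rewrite extend_zero_lo, transfer_interior by (auto; lia).
        apply (Hg _); [lia | apply base_face; auto; lia].
    + rewrite transfer_apex by auto. destruct (Nat.eq_dec j (S n)) as [-> |].
      * apply extend_zero_top. reflexivity.
      * rewrite extend_zero_lo by lia. apply (Hideal j ltac:(lia)).
  - intros j' y Hj' HnJ Hf.
    assert (Hj'n : (j' <= n)%nat).
    { destruct (Nat.eq_dec j' (S n)); [exfalso; apply HnJ; right |]; auto; lia. }
    destruct (Rlt_dec (proj1_sig y (S n)) 1) as [r | r]; [| apply transfer_apex; auto].
    rewrite transfer_interior by auto. apply (proj2 (Hg _) j'); auto.
    + intro HJ. apply HnJ. left. auto.
    + apply base_face; auto.
Qed.

Lemma pullback_mem n (A : CStarAlg) I J (h : Simplex (S n) -> A) :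
  inBJ (S n) (extend_zero n I) (addJ J (S n)) h ->
  inSBJ n I J (fun p => h (susp_point n p)).
Proof.
  intros [[Hc [Hb Hf]] HJ]. split; [| split].
  - intro t. split; [split; [| split] |].
    + intro x. apply (seq_continuous (fun x => h (susp_point n (t, x))) x).
      intros Y HY eps He.
      destruct (Hc (susp_point n (t, x)) eps He) as [d [Hd Hnear]].
      destruct (coord_cv_uniform (S n) _ _ (susp_continuous_x n (proj1_sig t) x Y HY) d Hd)
        as [N HN].
      exists N. intros k Hk. rewrite dist_sym. apply Hnear. intros i Hi. simpl.
      rewrite Rabs_minus_sym. apply HN; auto.
    + intros x Hx. apply Hb, susp_boundary; auto.
    + intros j x Hj Hx. rewrite <- (extend_zero_lo n I j Hj). apply Hf; [lia |].
      apply susp_face; auto.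
    + intros j' x Hj' HnJ Hx. apply (HJ j'); [lia | | apply susp_face; auto].
      intros [H1 | H1]; [contradiction | lia].
  - intros t x [H0 | H1].
    + apply (extend_zero_top n I), Hf, susp_t0_face; auto.
    + apply Hb, susp_t1_boundary; auto.
  - intros t eps He. destruct (unif_continuous h Hc eps He) as [d [Hd Hnear]].
    exists d. split; auto. intros s Hs x. left. apply Hnear. intros i Hi.
    eapply Rle_lt_trans; [apply susp_lipschitz_t; auto | auto].
Qed.

Theorem proposition6p2p3 (n : nat) :
  exists Phi : forall (A : CStarAlg) (I : nat -> A -> Prop) (J : nat -> Prop),
      (I01 * Simplex n -> A) -> (Simplex (S n) -> A),
    (forall (A : CStarAlg) (I : nat -> A -> Prop) (J : nat -> Prop),
       ideal_decomp A n I ->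
       (forall j, J j -> (j <= n)%nat) ->
       is_star_iso_on (inSBJ n I J) (inBJ (S n) (extend_zero n I) (addJ J (S n)))
         (Phi A I J)) /\
    (forall (A A' : CStarAlg) (I : nat -> A -> Prop) (I' : nat -> A' -> Prop)
            (J : nat -> Prop) (phi : A -> A'),
       ideal_decomp A n I -> ideal_decomp A' n I' ->
       (forall j, J j -> (j <= n)%nat) ->
       is_star_hom phi ->
       (forall j a, (j <= n)%nat -> I j a -> I' j (phi a)) ->
       forall g, inSBJ n I J g ->
         Phi A' I' J (fun z => phi (g z)) = (fun y => phi (Phi A I J g y))).
Proof.
  exists (fun A I J => transfer n (A := A)). split.
  - intros A I J Hdecomp _.
    (* g ↦ transfer g is a bijection with inverse h ↦ h ∘ σ ... *)
    split; [| split; [| split]].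
    + intros f Hf. apply transfer_mem; auto.
    + intros f g Hf Hg E. apply functional_extensionality; intro p.
      rewrite (transfer_susp n f (susp_vanishes_t1 Hf)),
        (transfer_susp n g (susp_vanishes_t1 Hg)), E.
      reflexivity.
    + intros h Hh. exists (fun p => h (susp_point n p)).
      split; [apply pullback_mem; auto |].
      destruct Hh as [[_ [Hb Hf]] _].
      apply transfer_pullback; auto. intros y Hy. apply (extend_zero_top n I), Hf; auto.
    (* ... and, being pointwise, it commutes with the *-algebra operations. *)
    + repeat split; intros.
      * apply transfer_map2, add0.
      * apply transfer_map, smul_zero.
      * apply transfer_map2, mul_zero.
      * apply transfer_map, star_zero.
  - intros A A' I I' J phi _ _ _ Hphi _ g _. apply transfer_map, hom_zero; auto.
Qed.
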